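(* Let $P=P_1\times P_2$ with $P_1,P_2$ Cabanes $\ell$-groups, and let $A_i$ be the unique maximal abelian normal subgroup of $P_i$. Let $P_0$ be a normal subgroup of $P$ with $\pi_i(P_0)=P_i$ for $i=1,2$, where $\pi_i:P_1\times P_2\to P_i$ are the projections. Then $P_0$ is Cabanes, with unique maximal abelian normal subgroup $(A_1\times A_2)\cap P_0$.
   Context: An $\ell$-group is Cabanes if it has a unique maximal abelian normal subgroup. *)

From mathcomp Require Import all_boot all_fingroup all_solvable.
Set Implicit Arguments. Unset Strict Implicit. Unset Printing Implicit Defensive.
Local Open Scope group_scope.

Definition max_abelian_normal (gT : finGroupType) (G A : {group gT}) : Prop :=
  [max A | (A <| G) && abelian A].

Definition unique_max_abelian_normal (gT : finGroupType) (G A : {group gT}) : Prop :=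
  max_abelian_normal G A /\
  forall B : {group gT}, max_abelian_normal G B -> B = A.

Definition Cabanes (l : nat) (gT : finGroupType) (G : {group gT}) : Prop :=
  l.-group G /\ exists A : {group gT}, unique_max_abelian_normal G A.

From mathcomp Require Import all_boot all_fingroup all_solvable.
Set Implicit Arguments. Unset Strict Implicit. Unset Printing Implicit Defensive.
Local Open Scope group_scope.

(* The projections of an abelian normal subgroup B of P0 onto the factors are
   abelian and normal in P1 and P2 (the projections of P0 are onto), hence lie
   in A1 and A2; so B lies in (A1 x A2) :&: P0.  That group is itself abelian and
   normal in P0, so it is the unique maximal abelian normal subgroup of P0. *)

Section UniqueMaxAbelianNormal.

Variables (gT : finGroupType) (G A : {group gT}).

Lemma uniq_max_abelian_normal_sub (B : {group gT}) :
  unique_max_abelian_normal G A -> B <| G -> abelian B -> B \subset A.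
Proof.
move=> [_ uniqA] nBG abB.
have [M maxM sBM] := @maxgroup_exists _ (fun M => (M <| G) && abelian M) B
  (introT andP (conj nBG abB)).
by rewrite -(uniqA M maxM).
Qed.

Lemma uniq_max_abelian_normal_of_sub :
    A <| G -> abelian A ->
    (forall B : {group gT}, B <| G -> abelian B -> B \subset A) ->
  unique_max_abelian_normal G A.
Proof.
move=> nAG abA maxA.
have maxGA : max_abelian_normal G A.
  apply/maxgroupP; split=> [|B /andP[nBG abB] sAB]; first by rewrite nAG abA.
  by apply/eqP; rewrite eqEsubset sAB maxA.
split=> // B /maxgroupP[/andP[nBG abB] maxB].
by apply: val_inj; apply/esym/maxB; rewrite ?nAG ?abA ?maxA.
Qed.

End UniqueMaxAbelianNormal.

Lemma morphim_sub_uniq_max_abelian_normal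
    (aT rT : finGroupType) (D : {group aT}) (f : {morphism D >-> rT})
    (H B : {group aT}) (K A : {group rT}) :
    f @* H = K -> unique_max_abelian_normal K A ->
  B <| H -> abelian B -> f @* B \subset A.
Proof.
move=> fH_K uniqA nBH abB.
apply: uniq_max_abelian_normal_sub uniqA _ (morphim_abelian f abB).
by rewrite -fH_K morphim_normal.
Qed.

Section DirectProduct.

Variables (gT1 gT2 : finGroupType).
Lemma abelianX (H1 : {group gT1}) (H2 : {group gT2}) : abelian H1 -> abelian H2 -> abelian (setX H1 H2).
Proof.
move=> /centsP abH1 /centsP abH2.
apply/centsP=> -[x1 x2] /setXP[Hx1 Hx2] -[y1 y2] /setXP[Hy1 Hy2].
by congr (_, _); [exact: abH1 | exact: abH2].
Qed.

Lemma normalX (H1 G1 : {group gT1}) (H2 G2 : {group gT2}) :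
  H1 <| G1 -> H2 <| G2 -> setX H1 H2 <| setX G1 G2.
Proof.
move=> /andP[sHG1 nHG1] /andP[sHG2 nHG2].
rewrite /normal setXS //=; apply/subsetP=> -[x1 x2] /setXP[Gx1 Gx2].
rewrite inE; apply/subsetP=> -[y1 y2]; rewrite mem_conjg => /setXP[Hy1 Hy2].
rewrite inE /= -(memJ_norm _ (groupVr (subsetP nHG1 _ Gx1))).
by rewrite -(memJ_norm _ (groupVr (subsetP nHG2 _ Gx2))) Hy1.
Qed.

Lemma pgroupX (p : nat) (G1 : {group gT1}) (G2 : {group gT2}) :
  p.-group G1 -> p.-group G2 -> p.-group (setX G1 G2).
Proof. by move=> pG1 pG2; rewrite /pgroup cardsX pnatM; apply/andP. Qed.

Lemma subX_morphim (B : {group gT1 * gT2}) (H1 : {group gT1}) (H2 : {group gT2}) :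
    fst_morphism gT1 gT2 @* B \subset H1 ->
    snd_morphism gT1 gT2 @* B \subset H2 ->
  B \subset setX H1 H2.
Proof.
move=> /subsetP sB1 /subsetP sB2; apply/subsetP=> x Bx.
by rewrite inE sB1 ?sB2 ?mem_morphim ?inE.
Qed.

End DirectProduct.

Theorem mainTheorem16 (l : nat) (gT1 gT2 : finGroupType)
    (P1 A1 : {group gT1}) (P2 A2 : {group gT2}) (P0 : {group (gT1 * gT2)%type}) :
  prime l ->
  Cabanes l P1 -> Cabanes l P2 ->
  unique_max_abelian_normal P1 A1 -> unique_max_abelian_normal P2 A2 ->
  P0 <| setX P1 P2 ->
  [set x.1 | x in P0] = P1 -> [set x.2 | x in P0] = P2 ->
  Cabanes l P0 /\
  unique_max_abelian_normal P0 (setX A1 A2 :&: P0)%G.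
Proof.
move=> _ [lP1 _] [lP2 _] uniqA1 uniqA2 /andP[sP0P _] proj1P0 proj2P0.
have fstP0 : fst_morphism gT1 gT2 @* P0 = P1 by rewrite morphimE setTI proj1P0.
have sndP0 : snd_morphism gT1 gT2 @* P0 = P2 by rewrite morphimE setTI proj2P0.
have [/maxgroupP[/andP[nA1 abA1] _] _] := uniqA1.
have [/maxgroupP[/andP[nA2 abA2] _] _] := uniqA2.
have uniqA : unique_max_abelian_normal P0 (setX A1 A2 :&: P0)%G.
  apply: uniq_max_abelian_normal_of_sub => [||B nB abB].
  - by rewrite /= setIC (normalGI sP0P) ?normalX.
  - exact: abelianS (subsetIl _ _) (abelianX abA1 abA2).
  - rewrite /= subsetI (normal_sub nB) andbT.
    apply: subX_morphim.
    + exact: morphim_sub_uniq_max_abelian_normal fstP0 uniqA1 nB abB.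
    + exact: morphim_sub_uniq_max_abelian_normal sndP0 uniqA2 nB abB.
split=> //; split; last by exists (setX A1 A2 :&: P0)%G.
exact: pgroupS sP0P (pgroupX lP1 lP2).
Qed.
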